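(* Let $\mathcal{L}$ be the category of algebraic lattices (with morphisms as defined below), let $\mathfrak{M}$ be the class of normal monomorphisms and $\mathfrak{E}$ the class of normal epimorphisms in $\mathcal{L}$. Then $(\mathcal{L},\mathfrak{M},\mathfrak{E})$ is a proto-exact category.
   Context: In a complete lattice $L$, an element $x$ is compact if whenever $x\le\bigvee_{i\in I}y_i$ there is a finite $F\subseteq I$ with $x\le\bigvee_{i\in F}y_i$. An algebraic lattice is a complete lattice in which every element is a join of compact elements. A morphism of algebraic lattices $f:L_1\to L_2$ is a function preserving arbitrary joins (including the empty join) and sending compact elements to compact elements (meets need not be preserved). The one-element lattice is a zero object. A morphism $f:L_1\to L_2$ is a normal monomorphism if $f$ is injective and $f(L_1)$ is downward closed in $L_2$. It is a normal epimorphism if there is $x_0\in L_1$ and an isomorphism $\varphi:\{y\in L_1: y\ge x_0\}\to L_2$ with $f(y)=\varphi(y\vee x_0)$ for all $y\in L_1$. A proto-exact category is a pointed category $\mathcal{C}$ with two classes of morphisms $\mathfrak{M}$ (admissible monomorphisms) and $\mathfrak{E}$ (admissible epimorphisms) such that: (1) for every object $A$, $0\to A$ lies in $\mathfrak{M}$ and $A\to 0$ lies in $\mathfrak{E}$; (2) $\mathfrak{M}$ and $\mathfrak{E}$ contain all isomorphisms and are closed under composition; (3) a commutative square with top $i:A\to B$, bottom $i':A'\to B'$ in $\mathfrak{M}$ and left $j:A\to A'$, right $j':B\to B'$ in $\mathfrak{E}$ is a pullback if and only if it is a pushout; (4) every pair $i':A'\to B'$ in $\mathfrak{M}$, $j':B\to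 B'$ in $\mathfrak{E}$ can be completed to such a square which is both a pullback and a pushout, with $i\in\mathfrak{M}$, $j\in\mathfrak{E}$; (5) every pair $i:A\to B$ in $\mathfrak{M}$, $j:A\to A'$ in $\mathfrak{E}$ can be completed to such a square which is both a pullback and a pushout, with $i'\in\mathfrak{M}$, $j'\in\mathfrak{E}$. *)

From Stdlib Require Import List.
Set Implicit Arguments.

Record CLat := {
  car :> Type;
  le : car -> car -> Prop;
  le_refl : forall x, le x x;
  le_trans : forall x y z, le x y -> le y z -> le x z;
  le_antisym : forall x y, le x y -> le y x -> x = y;
  sup : (car -> Prop) -> car;
  sup_ub : forall (S : car -> Prop) x, S x -> le x (sup S);
  sup_least : forall (S : car -> Prop) y, (forall x, S x -> le x y) -> le (sup S) y
}.
Arguments le {c} _ _.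
Arguments sup {c} _.

Definition join2 {L : CLat} (x y : L) : L := sup (fun z => z = x \/ z = y).

Definition compact {L : CLat} (x : L) : Prop :=
  forall S : L -> Prop, le x (sup S) ->
    exists F : list L, (forall y, In y F -> S y) /\ le x (sup (fun y => In y F)).

Definition algebraic (L : CLat) : Prop :=
  forall x : L, x = sup (fun c => compact c /\ le c x).

Record AlgLat := { alat :> CLat; alat_alg : algebraic alat }.

Definition img {A B : Type} (f : A -> B) (S : A -> Prop) : B -> Prop :=
  fun y => exists x, S x /\ y = f x.

Record hom (A B : AlgLat) := {
  fn :> A -> B;
  hom_sup : forall S : A -> Prop, fn (sup S) = sup (img fn S);
  hom_compact : forall c : A, compact c -> compact (fn c)
}.

Definition comp_eq {A B C D : AlgLat} (f : hom A B) (g : hom B D) (h : hom A C) (k : hom C D) :=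
  forall a, g (f a) = k (h a).

Definition is_iso {A B : AlgLat} (f : hom A B) : Prop :=
  exists g : hom B A, (forall a, g (f a) = a) /\ (forall b, f (g b) = b).

Definition normal_mono {A B : AlgLat} (f : hom A B) : Prop :=
  (forall x y, f x = f y -> x = y) /\
  (forall (b : B) (a : A), le b (f a) -> exists a', f a' = b).

Definition upset_iso {L M : CLat} (x0 : L) (phi : {y : L | le x0 y} -> M) : Prop :=
  (forall m : M, exists y, phi y = m) /\
  (forall y z, le (proj1_sig y) (proj1_sig z) <-> le (phi y) (phi z)).

Lemma join2_upper_r {L : CLat} (x0 y : L) : le x0 (join2 y x0).
Proof. apply sup_ub; now right. Qed.

Definition normal_epi {A B : AlgLat} (f : hom A B) : Prop :=
  exists (x0 : A) (phi : {y : A | le x0 y} -> B),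
    upset_iso x0 phi /\
    forall y : A, f y = phi (exist _ (join2 y x0) (join2_upper_r x0 y)).

Definition cls := forall A B : AlgLat, hom A B -> Prop.

Definition is_pullback {A B A' B' : AlgLat}
  (i : hom A B) (j : hom A A') (j' : hom B B') (i' : hom A' B') : Prop :=
  forall (W : AlgLat) (p : hom W A') (q : hom W B), comp_eq p i' q j' ->
    exists u : hom W A, (forall w, j (u w) = p w) /\ (forall w, i (u w) = q w) /\
      forall v : hom W A, (forall w, j (v w) = p w) -> (forall w, i (v w) = q w) ->
        forall w, v w = u w.

Definition is_pushout {A B A' B' : AlgLat}
  (i : hom A B) (j : hom A A') (j' : hom B B') (i' : hom A' B') : Prop :=
  forall (W : AlgLat) (p : hom A' W) (q : hom B W), comp_eq j p i q ->
    exists u : hom B' W, (forall a, u (i' a) = p a) /\ (forall b, u (j' b) = q b) /\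
      forall v : hom B' W, (forall a, v (i' a) = p a) -> (forall b, v (j' b) = q b) ->
        forall b', v b' = u b'.

Definition zero_object (Z : AlgLat) : Prop :=
  forall A : AlgLat,
    (exists f : hom Z A, forall g : hom Z A, forall z, g z = f z) /\
    (exists f : hom A Z, forall g : hom A Z, forall a, g a = f a).

Definition proto_exact (M E : cls) : Prop :=
  (exists Z : AlgLat, zero_object Z) /\
  (forall (Z : AlgLat), zero_object Z -> forall (A : AlgLat),
     (forall f : hom Z A, M Z A f) /\ (forall g : hom A Z, E A Z g)) /\
  (forall (A B : AlgLat) (f : hom A B), is_iso f -> M A B f /\ E A B f) /\
  (forall (A B C : AlgLat) (f : hom A B) (g : hom B C) (h : hom A C),
     (forall a, h a = g (f a)) ->
     (M A B f -> M B C g -> M A C h) /\ (E A B f -> E B C g -> E A C h)) /\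
  (forall (A B A' B' : AlgLat) (i : hom A B) (j : hom A A') (j' : hom B B') (i' : hom A' B'),
     M A B i -> M A' B' i' -> E A A' j -> E B B' j' -> comp_eq i j' j i' ->
     (is_pullback i j j' i' <-> is_pushout i j j' i')) /\
  (forall (A' B B' : AlgLat) (i' : hom A' B') (j' : hom B B'),
     M A' B' i' -> E B B' j' ->
     exists (A : AlgLat) (i : hom A B) (j : hom A A'),
       M A B i /\ E A A' j /\ comp_eq i j' j i' /\
       is_pullback i j j' i' /\ is_pushout i j j' i') /\
  (forall (A B A' : AlgLat) (i : hom A B) (j : hom A A'),
     M A B i -> E A A' j ->
     exists (B' : AlgLat) (i' : hom A' B') (j' : hom B B'),
       M A' B' i' /\ E B B' j' /\ comp_eq i j' j i' /\
       is_pullback i j j' i' /\ is_pushout i j j' i').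

Definition NM : cls := fun A B f => normal_mono f.
Definition NE : cls := fun A B f => normal_epi f.

(** The key fact is that a normal epimorphism [f : A -> B] is, up to
    isomorphism, the map [a |-> a \/ x0] onto the principal filter of its
    kernel [x0], so that [f a <= f b <-> a <= b \/ x0].  A commutative square
    with normal monomorphisms [i, i'] and normal epimorphisms [j, j'] with
    kernels [x0, y0] is then a pullback, and also a pushout, exactly when
    [y0 <= i x0] (the reverse inequality holds by commutativity).
    Sufficiency is a direct factorisation argument; necessity is tested
    against the two-element lattice: maps out of it pick compact elements
    below [y0] (pullback), maps into it are characteristic maps of principal
    ideals (pushout).  The squares required by the axioms are built on the
    principal ideal below a preimage of [i' top], respectively on the
    principal filter above [i x0]. *)

From Stdlib Require Import List ClassicalEpsilon ProofIrrelevance.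

#[local] Arguments le_refl {c} x.
#[local] Arguments le_trans {c} x y z _ _.
#[local] Arguments le_antisym {c} x y _ _.
#[local] Arguments sup_ub {c} S x _.
#[local] Arguments sup_least {c} S y _.

Notation lsup F := (sup (fun y => In y F)).

Section CompleteLattice.
Context {L : CLat}.
Implicit Types (a b c : L) (S T : L -> Prop).

Lemma sup_ext S T : (forall x, S x <-> T x) -> sup S = sup T.
Proof.
  intros H; apply le_antisym; apply sup_least; intros x Hx; apply sup_ub, H; exact Hx.
Qed.

Lemma sup_mono S T : (forall x, S x -> T x) -> le (sup S) (sup T).
Proof. intros H; apply sup_least; intros x Hx; apply sup_ub, H, Hx. Qed.

Definition bot : L := sup (fun _ => False).
Definition top : L := sup (fun _ => True).

Lemma bot_least a : le bot a.
Proof. apply sup_least; intros _ []. Qed.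

Lemma top_greatest a : le a top.
Proof. apply sup_ub; exact I. Qed.

Lemma join2_l a b : le a (join2 a b).
Proof. apply sup_ub; now left. Qed.

Lemma join2_r a b : le b (join2 a b).
Proof. apply sup_ub; now right. Qed.

Lemma join2_lub a b c : le a c -> le b c -> le (join2 a b) c.
Proof. intros Ha Hb; apply sup_least; intros x [-> | ->]; assumption. Qed.

Lemma join2_lub_iff a b c : le (join2 a b) c <-> le a c /\ le b c.
Proof.
  split.
  - intros H; split; (eapply le_trans; [| exact H]); [apply join2_l | apply join2_r].
  - intros [Ha Hb]; now apply join2_lub.
Qed.

End CompleteLattice.

Arguments bot {L}.
Arguments top {L}.

Ltac lattice0 :=
  first [ assumption | apply le_refl | apply bot_least | apply top_greatest
        | apply join2_lub; lattice0
        | eapply le_trans; [| apply join2_l]; lattice0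
        | eapply le_trans; [| apply join2_r]; lattice0 ].
Ltac lattice := first [ lattice0 | eapply le_trans; [eassumption | lattice0] ].

Lemma join2_bot {L : CLat} (a : L) : join2 a bot = a.
Proof. apply le_antisym; lattice. Qed.

Lemma join2_absorb_l {L : CLat} (a b : L) : le b a -> join2 a b = a.
Proof. intros; apply le_antisym; lattice. Qed.

Lemma join2_absorb_r {L : CLat} (a b : L) : le a b -> join2 a b = b.
Proof. intros; apply le_antisym; lattice. Qed.

Section Homomorphism.
Context {A B : AlgLat} (f : hom A B).

Lemma hom_join2 a b : f (join2 a b) = join2 (f a) (f b).
Proof.
  unfold join2; rewrite hom_sup; apply sup_ext; intros z; split.
  - intros [x [[-> | ->] ->]]; auto.
  - intros [-> | ->]; [exists a | exists b]; auto.
Qed.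

Lemma hom_mono a b : le a b -> le (f a) (f b).
Proof. intros H; rewrite <- (join2_absorb_r _ _ H), hom_join2; apply join2_l. Qed.

Lemma hom_bot : f bot = bot.
Proof.
  unfold bot; rewrite hom_sup; apply sup_ext; intros z; split; [intros [x [[] _]] | intros []].
Qed.

Lemma hom_lsup (F : list A) : f (lsup F) = lsup (map f F).
Proof.
  rewrite hom_sup; apply sup_ext; intros z; split.
  - intros [x [H ->]]; now apply in_map.
  - intros H; apply in_map_iff in H as [x [<- H]]; exists x; auto.
Qed.

End Homomorphism.

Lemma compact_bot {L : CLat} : compact (@bot L).
Proof. intros S _; exists nil; split; [intros _ [] | apply bot_least]. Qed.

Lemma compact_lsup {L : CLat} (F : list L) :
  (forall c, In c F -> compact c) -> compact (lsup F).
Proof.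
  induction F as [|a F IH]; intros HF S Hle; [apply compact_bot; exact Hle|].
  destruct (HF a (or_introl eq_refl) S) as [G1 [HG1 Ha]].
  { eapply le_trans; [| exact Hle]; apply sup_ub; now left. }
  destruct (IH (fun c Hc => HF c (or_intror Hc)) S) as [G2 [HG2 HF']].
  { eapply le_trans; [| exact Hle]; apply sup_mono; intros; now right. }
  exists (G1 ++ G2); split.
  - intros y Hy; apply in_app_or in Hy as [Hy | Hy]; auto.
  - apply sup_least; intros y [<- | Hy].
    + eapply le_trans; [exact Ha |]; apply sup_mono; intros; apply in_or_app; now left.
    + eapply le_trans; [apply (sup_ub (fun z => In z F)); exact Hy |].
      eapply le_trans; [exact HF' |].
      apply sup_mono; intros; apply in_or_app; now right.
Qed.

Lemma list_preimage {X Y : Type} (f : X -> Y) (S : X -> Prop) (F : list Y) :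
  (forall y, In y F -> img f S y) -> exists G, (forall x, In x G -> S x) /\ F = map f G.
Proof.
  induction F as [|y F IH]; intros H; [exists nil; split; [intros _ [] | reflexivity]|].
  destruct (H y (or_introl eq_refl)) as [x [Hx ->]].
  destruct IH as [G [HG ->]]; [intros; apply H; now right|].
  exists (x :: G); split; [intros z [<- | Hz]; auto | reflexivity].
Qed.

Lemma compact_le_join {L : CLat} (k y : L) (S : L -> Prop) :
  compact k -> le k (join2 (sup S) y) ->
  exists F, (forall z, In z F -> S z) /\ le k (join2 (lsup F) y).
Proof.
  intros Hk Hle.
  destruct (Hk (fun z => S z \/ z = y)) as [F [HF Hk']].
  { eapply le_trans; [exact Hle|]; apply join2_lub; [apply sup_mono; auto | apply sup_ub; now right]. }
  set (inS := fun z => if excluded_middle_informative (S z) then true else false).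
  exists (filter inS F); split.
  - intros z Hz; apply filter_In in Hz as [_ Hz]; unfold inS in Hz.
    destruct excluded_middle_informative; [assumption | discriminate].
  - eapply le_trans; [exact Hk'|]; apply sup_least; intros z Hz.
    destruct (HF z Hz) as [HSz | ->]; [| apply join2_r].
    eapply le_trans; [| apply join2_l]; apply sup_ub, filter_In; split; [exact Hz|].
    unfold inS; destruct excluded_middle_informative; [reflexivity | contradiction].
Qed.

Section InjectiveHom.
Context {A B : AlgLat} (i : hom A B) (i_inj : forall x y, i x = i y -> x = y).

Lemma hom_inj_le x y : le (i x) (i y) -> le x y.
Proof.
  intros H.
  assert (E : join2 x y = y) by (apply i_inj; rewrite hom_join2; now apply join2_absorb_r).
  rewrite <- E; apply join2_l.
Qed.

Lemma hom_inj_compact c : compact (i c) -> compact c.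
Proof.
  intros Hc S Hle; apply (hom_mono i) in Hle; rewrite hom_sup in Hle.
  destruct (Hc _ Hle) as [F [HF HcF]].
  destruct (list_preimage i S F HF) as [G [HG ->]].
  exists G; split; [exact HG|]; apply hom_inj_le; now rewrite hom_lsup.
Qed.

Lemma hom_lift_inj {W : AlgLat} (q : hom W B) :
  (forall w, exists a, i a = q w) -> exists u : hom W A, forall w, i (u w) = q w.
Proof.
  intros Hq.
  set (u := fun w => proj1_sig (constructive_indefinite_description _ (Hq w))).
  assert (Hu : forall w, i (u w) = q w)
    by (intros w; exact (proj2_sig (constructive_indefinite_description _ (Hq w)))).
  unshelve eexists (Build_hom W A u _ _); [| | exact Hu].
  - intros S; apply i_inj; rewrite Hu, !hom_sup; apply sup_ext; intros z; split.
    + intros [w [Hw ->]]; exists (u w); split; [exists w; auto | auto].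
    + intros [a [[w [Hw ->]] ->]]; exists w; auto.
  - intros c Hc; apply hom_inj_compact; rewrite Hu; now apply hom_compact.
Qed.

End InjectiveHom.

Section SurjectiveHom.
Context {A C : AlgLat} (f : hom A C) (f_surj : forall b, exists a, f a = b).

Lemma surj_lift_compact b : compact b -> exists c, compact c /\ f c = b.
Proof.
  intros Hb; destruct (f_surj b) as [a <-].
  assert (Hle : le (f a) (sup (img f (fun c => compact c /\ le c a)))).
  { rewrite <- hom_sup, <- (alat_alg A a); apply le_refl. }
  destruct (Hb _ Hle) as [F [HF HbF]].
  destruct (list_preimage f _ F HF) as [G [HG ->]].
  exists (lsup G); split.
  - apply compact_lsup; intros; now apply HG.
  - apply le_antisym; [| now rewrite hom_lsup].
    apply hom_mono, sup_least; intros; now apply HG.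
Qed.

Lemma hom_desc_surj {D : AlgLat} (g : hom A D) :
  (forall a b, f a = f b -> g a = g b) -> exists k : hom C D, forall a, k (f a) = g a.
Proof.
  intros Hg.
  set (s := fun c => proj1_sig (constructive_indefinite_description _ (f_surj c))).
  assert (Hs : forall c, f (s c) = c)
    by (intros c; exact (proj2_sig (constructive_indefinite_description _ (f_surj c)))).
  assert (Hk : forall a, g (s (f a)) = g a) by (intros a; apply Hg, Hs).
  unshelve eexists (Build_hom C D (fun c => g (s c)) _ _); [| | exact Hk].
  - intros S; simpl.
    assert (E : sup S = f (sup (fun a => S (f a)))).
    { rewrite hom_sup; apply sup_ext; intros z; split.
      - intros Hz; destruct (f_surj z) as [a <-]; exists a; auto.
      - intros [a [Ha ->]]; exact Ha. }
    rewrite E, Hk, hom_sup; apply sup_ext; intros z; split.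
    + intros [a [Ha ->]]; exists (f a); split; auto.
    + intros [c [Hc ->]]; destruct (f_surj c) as [a <-]; exists a; split; auto.
  - intros c Hc; destruct (surj_lift_compact c Hc) as [c' [Hc' <-]].
    rewrite Hk; now apply hom_compact.
Qed.

End SurjectiveHom.

Definition quotient_by {A B : AlgLat} (f : hom A B) (x0 : A) : Prop :=
  (forall b, exists a, f a = b) /\ (forall a b, le (f a) (f b) <-> le a (join2 b x0)).

Lemma quotient_of_normal_epi {A B : AlgLat} (f : hom A B) :
  normal_epi f -> exists x0, quotient_by f x0.
Proof.
  intros [x0 [phi [[phi_surj phi_le] Hf]]]; exists x0; split.
  - intros m; destruct (phi_surj m) as [[v Hv] <-]; exists v; rewrite Hf.
    f_equal; apply subset_eq_compat; now apply join2_absorb_l.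
  - intros a b; rewrite !Hf, <- phi_le; simpl; rewrite join2_lub_iff.
    split; [intros [? _]; assumption | intros; split; [assumption | apply join2_r]].
Qed.

Lemma normal_epi_of_quotient {A B : AlgLat} (f : hom A B) x0 :
  quotient_by f x0 -> normal_epi f.
Proof.
  intros [f_surj f_le].
  assert (Hj : forall a, f (join2 a x0) = f a) by (intros a; apply le_antisym; apply f_le; lattice).
  exists x0, (fun y => f (proj1_sig y)); split; [split|].
  - intros m; destruct (f_surj m) as [a <-].
    exists (exist _ (join2 a x0) (join2_r a x0)); apply Hj.
  - intros [y Hy] [z Hz]; simpl; rewrite f_le, (join2_absorb_l z x0 Hz); tauto.
  - intros y; simpl; now rewrite Hj.
Qed.

Section Quotient.
Context {A B : AlgLat} (f : hom A B) (x0 : A) (Hf : quotient_by f x0).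

Lemma quotient_join a : f (join2 a x0) = f a.
Proof. apply le_antisym; apply (proj2 Hf); lattice. Qed.

Lemma quotient_bot_iff a : f a = bot <-> le a x0.
Proof.
  rewrite <- (hom_bot f); split.
  - intros E; assert (H : le (f a) (f bot)) by (rewrite E; apply le_refl).
    apply (proj2 Hf) in H; eapply le_trans; [exact H | lattice].
  - intros; apply le_antisym; [apply (proj2 Hf); lattice | apply hom_mono, bot_least].
Qed.

Lemma quotient_kernel : f x0 = bot.
Proof. apply quotient_bot_iff, le_refl. Qed.

Lemma quotient_eq a b : f a = f b -> join2 a x0 = join2 b x0.
Proof.
  intros E; apply le_antisym; apply join2_lub; try apply join2_r; apply (proj2 Hf);
    rewrite E; apply le_refl.
Qed.

End Quotient.

Definition hom0 (A B : AlgLat) : hom A B.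
Proof.
  refine (Build_hom A B (fun _ => bot) _ _).
  - intros S; apply le_antisym; [apply bot_least | apply sup_least; intros x [_ [_ ->]]; apply le_refl].
  - intros; apply compact_bot.
Defined.

Definition hom_id (A : AlgLat) : hom A A.
Proof.
  refine (Build_hom A A (fun a => a) _ _); [| auto].
  intros S; apply sup_ext; intros z; split; [intros Hz; exists z; auto | intros [x [Hx ->]]; auto].
Defined.

Definition hom_comp {A B C : AlgLat} (f : hom A B) (g : hom B C) : hom A C.
Proof.
  refine (Build_hom A C (fun a => g (f a)) _ _).
  - intros S; rewrite !hom_sup; apply sup_ext; intros z; split.
    + intros [b [[a [Ha ->]] ->]]; exists a; auto.
    + intros [a [Ha ->]]; exists (f a); split; auto; exists a; auto.
  - intros c Hc; now apply hom_compact, hom_compact.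
Defined.

Definition holds (P : Prop) : bool := if excluded_middle_informative P then true else false.

Lemma holds_true (P : Prop) : holds P = true <-> P.
Proof. unfold holds; destruct excluded_middle_informative; split; auto; discriminate. Qed.

Lemma holds_false (P : Prop) : holds P = false <-> ~ P.
Proof. unfold holds; destruct excluded_middle_informative; split; auto; try discriminate; tauto. Qed.

Definition TwoC : CLat.
Proof.
  refine (@Build_CLat bool (fun a b => a = true -> b = true) _ _ _ (fun S => holds (S true)) _ _).
  - auto.
  - auto.
  - intros [] [] H1 H2; try reflexivity; [symmetry; apply H1 | apply H2]; reflexivity.
  - intros S [] Hx Ht; [now apply holds_true | discriminate].
  - intros S y H Hs; rewrite holds_true in Hs; exact (H true Hs eq_refl).
Defined.

Lemma two_compact (b : TwoC) : compact b.
Proof.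
  intros S H; destruct b; [| exists nil; split; [intros _ [] | discriminate]].
  exists (true :: nil); split.
  - intros y [<- | []]; apply holds_true, H; reflexivity.
  - intros _; apply holds_true; now left.
Qed.

Lemma two_algebraic : algebraic TwoC.
Proof.
  intros x; apply le_antisym.
  - apply sup_ub; split; [apply two_compact | apply le_refl].
  - apply sup_least; intros y [_ Hy]; exact Hy.
Qed.

Definition Two : AlgLat := {| alat := TwoC; alat_alg := two_algebraic |}.

Lemma two_bot : (bot : Two) = false.
Proof. apply holds_false; tauto. Qed.

Definition chi {L : AlgLat} (m : L) : hom L Two.
Proof.
  refine (Build_hom L Two (fun b => holds (~ le b m)) _ _); [| intros; apply two_compact].
  intros S; apply le_antisym; simpl; rewrite !holds_true.
  - intros Hn; apply NNPP; intros Hno; apply Hn, sup_least; intros x Hx.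
    apply NNPP; intros Hx'; apply Hno; exists x; split; [exact Hx | symmetry; now apply holds_true].
  - intros [s [Hs E]] H; symmetry in E; rewrite holds_true in E.
    apply E; eapply le_trans; [apply sup_ub; exact Hs | exact H].
Defined.

Lemma chi_false {L : AlgLat} (m b : L) : chi m b = false <-> le b m.
Proof. simpl; rewrite holds_false; split; [apply NNPP | tauto]. Qed.

Lemma chi_eq {L M : AlgLat} (m b : L) (m' b' : M) :
  (le b m <-> le b' m') -> chi m b = chi m' b'.
Proof.
  rewrite <- (chi_false m b), <- (chi_false m' b').
  destruct (chi m b), (chi m' b'); intuition congruence.
Qed.

Definition pick {L : AlgLat} (c : L) (Hc : compact c) : hom Two L.
Proof.
  refine (Build_hom Two L (fun b => if b then c else bot) _ _).
  - intros S; simpl; unfold holds; destruct excluded_middle_informative as [H | H].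
    + apply le_antisym; [apply sup_ub; exists true; auto |].
      apply sup_least; intros x [[] [_ ->]]; [apply le_refl | apply bot_least].
    + apply le_antisym; [apply bot_least |].
      apply sup_least; intros x [[] [Hb ->]]; [contradiction | apply le_refl].
  - intros [] _; [exact Hc | apply compact_bot].
Defined.

Section PrincipalIdeal.
Context (B : CLat) (t : B).

Definition down_val (x : {b : B | le b t}) : B := proj1_sig x.

Lemma down_val_inj x y : down_val x = down_val y -> x = y.
Proof. destruct x, y; apply subset_eq_compat. Qed.

Lemma down_sup_le (S : {b : B | le b t} -> Prop) : le (sup (img down_val S)) t.
Proof. apply sup_least; intros x [[v Hv] [_ ->]]; exact Hv. Qed.

Definition DownC : CLat.
Proof.
  refine (@Build_CLat {b : B | le b t} (fun x y => le (down_val x) (down_val y)) _ _ _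
            (fun S => exist _ (sup (img down_val S)) (down_sup_le S)) _ _).
  - intros; apply le_refl.
  - intros x y z; apply le_trans.
  - intros x y H1 H2; apply down_val_inj, le_antisym; assumption.
  - intros S x Hx; apply sup_ub; exists x; auto.
  - intros S y H; apply sup_least; intros z [x [Hx ->]]; auto.
Defined.

Lemma down_compact_of_compact (c : DownC) : compact (down_val c) -> compact c.
Proof.
  intros Hc S Hle.
  destruct (Hc _ Hle) as [F [HF HcF]].
  destruct (list_preimage down_val S F HF) as [G [HG ->]].
  exists G; split; [exact HG|]; simpl; eapply le_trans; [exact HcF|].
  apply sup_mono; intros z Hz; apply in_map_iff in Hz as [x [<- Hx]]; exists x; auto.
Qed.

End PrincipalIdeal.

Section PrincipalIdealAlgebraic.
Context (B : AlgLat) (t : B).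

Lemma down_below_compacts (x : DownC B t) (P : B -> Prop) :
  (forall z, P z -> le z (down_val B t x)) ->
  le (sup (fun z => P z)) (down_val B t (sup (fun d : DownC B t => P (down_val B t d)))).
Proof.
  intros HP; apply sup_least; intros z Hz.
  assert (Hzt : le z t) by (eapply le_trans; [exact (HP z Hz) | exact (proj2_sig x)]).
  apply sup_ub; exists (exist _ z Hzt); split; [exact Hz | reflexivity].
Qed.

Lemma compact_of_down_compact (c : DownC B t) : compact c -> compact (down_val B t c).
Proof.
  intros Hc.
  set (Q := fun z : B => compact z /\ le z (down_val B t c)).
  assert (Hle : le c (sup (fun d : DownC B t => Q (down_val B t d)))).
  { simpl; rewrite (alat_alg B (down_val B t c)) at 1.
    apply (down_below_compacts c Q); intros z [_ Hz]; exact Hz. }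
  destruct (Hc _ Hle) as [F [HF HcF]].
  assert (E : down_val B t c = lsup (map (down_val B t) F)).
  { apply le_antisym.
    - eapply le_trans; [exact HcF|]; apply sup_mono; intros z [x [Hx ->]]; now apply in_map.
    - apply sup_least; intros z Hz; apply in_map_iff in Hz as [x [<- Hx]]; apply HF, Hx. }
  rewrite E; apply compact_lsup; intros z Hz; apply in_map_iff in Hz as [x [<- Hx]]; apply HF, Hx.
Qed.

Lemma down_algebraic : algebraic (DownC B t).
Proof.
  intros x; apply le_antisym.
  - simpl; rewrite (alat_alg B (down_val B t x)) at 1.
    eapply le_trans.
    + apply (down_below_compacts x (fun z => compact z /\ le z (down_val B t x))).
      intros z [_ Hz]; exact Hz.
    + simpl; apply sup_mono; intros z [d [[Hd Hdx] ->]]; exists d.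
      split; [split; [apply down_compact_of_compact, Hd | exact Hdx] | reflexivity].
  - apply sup_least; intros y [_ Hy]; exact Hy.
Qed.

Definition Down : AlgLat := {| alat := DownC B t; alat_alg := down_algebraic |}.

Definition down_incl : hom Down B.
Proof.
  refine (Build_hom Down B (down_val B t) _ _); [reflexivity |].
  intros c Hc; now apply compact_of_down_compact.
Defined.

Lemma down_incl_normal_mono : normal_mono down_incl.
Proof.
  split; [apply down_val_inj |].
  intros b a Hb.
  assert (Hbt : le b t) by (eapply le_trans; [exact Hb | exact (proj2_sig a)]).
  exists (exist _ b Hbt); reflexivity.
Qed.

End PrincipalIdealAlgebraic.

Section PrincipalFilter.
Context (B : CLat) (y : B).

Definition up_val (x : {b : B | le y b}) : B := proj1_sig x.

Lemma up_val_inj x z : up_val x = up_val z -> x = z.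
Proof. destruct x, z; apply subset_eq_compat. Qed.

Definition UpC : CLat.
Proof.
  refine (@Build_CLat {b : B | le y b} (fun x z => le (up_val x) (up_val z)) _ _ _
            (fun S => exist _ (join2 (sup (img up_val S)) y) (join2_r _ _)) _ _).
  - intros; apply le_refl.
  - intros x w z; apply le_trans.
  - intros x w H1 H2; apply up_val_inj, le_antisym; assumption.
  - intros S x Hx; simpl; eapply le_trans; [| apply join2_l]; apply sup_ub; exists x; auto.
  - intros S w H; simpl; apply join2_lub; [| exact (proj2_sig w)].
    apply sup_least; intros z [x [Hx ->]]; auto.
Defined.

Lemma up_compact (k : B) :
  compact k -> compact (exist (fun b => le y b) (join2 k y) (join2_r k y) : UpC).
Proof.
  intros Hk S Hle; simpl in Hle; rewrite join2_lub_iff in Hle.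
  destruct (compact_le_join k y _ Hk (proj1 Hle)) as [F [HF HkF]].
  destruct (list_preimage up_val S F HF) as [G [HG ->]].
  exists G; split; [exact HG|]; simpl.
  apply join2_lub; [| apply join2_r]; eapply le_trans; [exact HkF|].
  apply join2_lub; [| apply join2_r]; eapply le_trans; [| apply join2_l].
  apply sup_mono; intros z Hz; apply in_map_iff in Hz as [x [<- Hx]]; exists x; auto.
Qed.

End PrincipalFilter.

Section PrincipalFilterAlgebraic.
Context (B : AlgLat) (y : B).

Lemma up_algebraic : algebraic (UpC B y).
Proof.
  intros x; apply le_antisym.
  - simpl; eapply le_trans; [| apply join2_l].
    rewrite (alat_alg B (up_val B y x)) at 1; apply sup_least; intros z [Hz Hzx].
    eapply le_trans; [apply (join2_l z y) |].
    apply sup_ub; exists (exist _ (join2 z y) (join2_r z y)); split; [| reflexivity].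
    split; [apply up_compact, Hz |]; simpl; apply join2_lub; [exact Hzx | exact (proj2_sig x)].
  - apply sup_least; intros w [_ Hw]; exact Hw.
Qed.

Definition Up : AlgLat := {| alat := UpC B y; alat_alg := up_algebraic |}.

Definition up_proj : hom B Up.
Proof.
  refine (Build_hom B Up (fun b => exist _ (join2 b y) (join2_r b y)) _ _);
    [| intros c Hc; exact (up_compact B y c Hc)].
  intros S; apply up_val_inj; simpl; apply le_antisym.
  - apply join2_lub; [| apply join2_r]; eapply le_trans; [| apply join2_l].
    apply sup_least; intros x Hx; eapply le_trans; [apply (join2_l x y) |].
    apply sup_ub; exists (exist _ (join2 x y) (join2_r x y)); split; [exists x; auto | reflexivity].
  - apply join2_lub; [| apply join2_r]; apply sup_least; intros z [w [[x [Hx ->]] ->]]; simpl.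
    apply join2_lub; [| apply join2_r]; eapply le_trans; [| apply join2_l]; apply sup_ub, Hx.
Defined.

Lemma up_proj_val (b : Up) : up_proj (up_val B y b) = b.
Proof. apply up_val_inj; simpl; apply join2_absorb_l, (proj2_sig b). Qed.

Lemma up_quotient : quotient_by up_proj y.
Proof.
  split.
  - intros b; exists (up_val B y b); apply up_proj_val.
  - intros a b; change (le (join2 a y) (join2 b y) <-> le a (join2 b y)).
    rewrite join2_lub_iff; split; [tauto | intros; split; [assumption | apply join2_r]].
Qed.

End PrincipalFilterAlgebraic.

Section NormalSquare.
Context {A B A' B' : AlgLat} (i : hom A B) (j : hom A A') (j' : hom B B') (i' : hom A' B')
  (x0 : A) (y0 : B) (Hi : normal_mono i) (Hi' : normal_mono i')
  (Hj : quotient_by j x0) (Hj' : quotient_by j' y0) (Hc : comp_eq i j' j i').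

Lemma pullback_of_kernel_le : le y0 (i x0) -> is_pullback i j j' i'.
Proof.
  intros Hy0 W p q Hpq.
  assert (Hq : forall w, exists a, i a = q w).
  { intros w; destruct (proj1 Hj (p w)) as [a Ha].
    assert (H : le (j' (q w)) (j' (i top))).
    { rewrite <- (Hpq w), <- Ha, <- (Hc a); apply hom_mono, hom_mono, top_greatest. }
    apply (proj2 Hj') in H; apply (proj2 Hi _ top); eapply le_trans; [exact H |].
    apply join2_lub; [apply le_refl |]; eapply le_trans; [exact Hy0 | apply hom_mono, top_greatest]. }
  destruct (hom_lift_inj i (proj1 Hi) q Hq) as [u Hu].
  exists u; split; [| split].
  - intros w; apply (proj1 Hi'); rewrite <- (Hc (u w)), Hu; symmetry; apply Hpq.
  - exact Hu.
  - intros v _ Hv w; apply (proj1 Hi); now rewrite Hv, Hu.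
Qed.

Lemma pushout_of_kernel_le : le y0 (i x0) -> is_pushout i j j' i'.
Proof.
  intros Hy0 W p q Hpq.
  assert (Hqy0 : q y0 = bot).
  { apply le_antisym; [| apply bot_least]; eapply le_trans; [apply hom_mono, Hy0 |].
    rewrite <- (Hpq x0), (quotient_kernel j x0 Hj), hom_bot; apply le_refl. }
  assert (Hq : forall b1 b2, j' b1 = j' b2 -> q b1 = q b2).
  { assert (Hle : forall b1 b2, j' b1 = j' b2 -> le (q b1) (q b2)).
    { intros b1 b2 E; assert (H : le (j' b1) (j' b2)) by (rewrite E; apply le_refl).
      apply (proj2 Hj'), (hom_mono q) in H; now rewrite hom_join2, Hqy0, join2_bot in H. }
    intros b1 b2 E; apply le_antisym; apply Hle; auto. }
  destruct (hom_desc_surj j' (proj1 Hj') q Hq) as [u Hu].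
  exists u; split; [| split].
  - intros a'; destruct (proj1 Hj a') as [a <-]; rewrite <- (Hc a), Hu; symmetry; apply Hpq.
  - exact Hu.
  - intros v _ Hv b'; destruct (proj1 Hj' b') as [b <-]; now rewrite Hv, Hu.
Qed.

(* Every compact [c <= y0] yields the cone [Two -> B] picking [c], with zero leg to [A']. *)
Lemma kernel_le_of_pullback : is_pullback i j j' i' -> le y0 (i x0).
Proof.
  intros Hpb; rewrite (alat_alg B y0); apply sup_least; intros c [Hcc Hcy].
  destruct (Hpb Two (hom0 Two A') (pick c Hcc)) as [u [Hu1 [Hu2 _]]].
  { intros w; simpl; rewrite hom_bot; destruct w.
    - symmetry; now apply (quotient_bot_iff j' y0 Hj').
    - symmetry; apply hom_bot. }
  specialize (Hu1 true); specialize (Hu2 true); simpl in Hu1, Hu2.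
  rewrite <- Hu2; apply hom_mono, (quotient_bot_iff j x0 Hj), Hu1.
Qed.

(* Test against the characteristic maps of [bot] in [A'] and of [i x0] in [B]. *)
Lemma kernel_le_of_pushout : is_pushout i j j' i' -> le y0 (i x0).
Proof.
  intros Hpo.
  destruct (Hpo Two (chi (bot : A')) (chi (i x0))) as [u [_ [Hu2 _]]].
  { intros a; apply chi_eq; split; intros H.
    - apply hom_mono, (quotient_bot_iff j x0 Hj), le_antisym; [exact H | apply bot_least].
    - rewrite (proj2 (quotient_bot_iff j x0 Hj a)); [apply le_refl |].
      apply (hom_inj_le i (proj1 Hi)), H. }
  apply chi_false; rewrite <- Hu2, (quotient_kernel j' y0 Hj'), hom_bot; apply two_bot.
Qed.

Lemma pullback_iff_kernel_le : is_pullback i j j' i' <-> le y0 (i x0).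
Proof using All.
  split; [apply kernel_le_of_pullback | apply pullback_of_kernel_le].
Qed.

Lemma pushout_iff_kernel_le : is_pushout i j j' i' <-> le y0 (i x0).
Proof using All.
  split; [apply kernel_le_of_pushout | apply pushout_of_kernel_le].
Qed.

End NormalSquare.

Definition UnitC : CLat.
Proof.
  refine (@Build_CLat unit (fun _ _ => True) _ _ _ (fun _ => tt) _ _); auto.
  intros [] [] _ _; reflexivity.
Defined.

Lemma unit_algebraic : algebraic UnitC.
Proof. intros []; reflexivity. Qed.

Definition UnitL : AlgLat := {| alat := UnitC; alat_alg := unit_algebraic |}.

Lemma unit_zero_object : zero_object UnitL.
Proof.
  intros A; split.
  - exists (hom0 UnitL A); intros g []; change tt with (bot : UnitL); apply hom_bot.
  - exists (hom0 A UnitL); intros g a; destruct (g a), (hom0 A UnitL a); reflexivity.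
Qed.

Lemma zero_object_trivial (Z : AlgLat) : zero_object Z -> forall z : Z, z = bot.
Proof.
  intros HZ z; destruct (proj1 (HZ Z)) as [f Hf].
  transitivity (f z); [exact (Hf (hom_id Z) z) | symmetry; exact (Hf (hom0 Z Z) z)].
Qed.

Lemma zero_normal (Z A : AlgLat) : zero_object Z ->
  (forall f : hom Z A, normal_mono f) /\ (forall g : hom A Z, normal_epi g).
Proof.
  intros HZ; pose proof (zero_object_trivial Z HZ) as Hbot; split.
  - intros f; split.
    + intros x y _; now rewrite (Hbot x), (Hbot y).
    + intros b a Hb; exists a; apply le_antisym; [| exact Hb].
      rewrite (Hbot a), hom_bot; apply bot_least.
  - intros g; apply (normal_epi_of_quotient g top); split.
    + intros b; exists top; now rewrite (Hbot b), (Hbot (g top)).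
    + intros a b; rewrite (Hbot (g a)), (Hbot (g b)); split; intros _; lattice.
Qed.

Lemma iso_normal {A B : AlgLat} (f : hom A B) : is_iso f -> normal_mono f /\ normal_epi f.
Proof.
  intros [g [Hgf Hfg]]; split.
  - split; [intros x y E; now rewrite <- (Hgf x), <- (Hgf y), E |].
    intros b a _; exists (g b); auto.
  - apply (normal_epi_of_quotient f bot); split; [intros b; exists (g b); auto |].
    intros a b; rewrite join2_bot; split; [| apply hom_mono].
    intros H; apply (hom_mono g) in H; now rewrite !Hgf in H.
Qed.

Section Composition.
Context {A B C : AlgLat} (f : hom A B) (g : hom B C) (h : hom A C)
  (Hh : forall a, h a = g (f a)).

Lemma normal_mono_comp : normal_mono f -> normal_mono g -> normal_mono h.
Proof.
  intros [f_inj f_down] [g_inj g_down]; split.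
  - intros x y E; rewrite !Hh in E; auto.
  - intros c a Hc; rewrite Hh in Hc; destruct (g_down c (f a) Hc) as [b <-].
    apply (hom_inj_le g g_inj) in Hc; destruct (f_down b a Hc) as [a' <-].
    exists a'; apply Hh.
Qed.

(* The kernel of [g o f] is any [f]-preimage of the kernel of [g], joined with the kernel of [f]. *)
Lemma normal_epi_comp : normal_epi f -> normal_epi g -> normal_epi h.
Proof.
  intros Ef Eg.
  destruct (quotient_of_normal_epi f Ef) as [x0 Hf], (quotient_of_normal_epi g Eg) as [y0 Hg].
  destruct (proj1 Hf y0) as [x1 Hx1].
  assert (Hx2 : f (join2 x1 x0) = y0) by (rewrite (quotient_join f x0 Hf); exact Hx1).
  apply (normal_epi_of_quotient h (join2 x1 x0)); split.
  - intros c; destruct (proj1 Hg c) as [b <-], (proj1 Hf b) as [a <-]; exists a; auto.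
  - intros a b; rewrite !Hh, (proj2 Hg), <- Hx2, <- hom_join2, (proj2 Hf).
    replace (join2 (join2 b (join2 x1 x0)) x0) with (join2 b (join2 x1 x0))
      by (apply le_antisym; lattice).
    reflexivity.
Qed.

End Composition.

Lemma normal_square_along_epi (A' B B' : AlgLat) (i' : hom A' B') (j' : hom B B') :
  normal_mono i' -> normal_epi j' ->
  exists (A : AlgLat) (i : hom A B) (j : hom A A'),
    normal_mono i /\ normal_epi j /\ comp_eq i j' j i' /\
    is_pullback i j j' i' /\ is_pushout i j j' i'.
Proof.
  intros Hi' Ej'; destruct (quotient_of_normal_epi j' Ej') as [y0 Hj'].
  destruct (proj1 Hj' (i' top)) as [b Hb].
  set (t := join2 b y0).
  assert (Ht : j' t = i' top) by (unfold t; rewrite (quotient_join j' y0 Hj'); exact Hb).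
  assert (Hy0t : le y0 t) by apply join2_r.
  assert (Himg : forall a : Down B t, exists a', i' a' = hom_comp (down_incl B t) j' a).
  { intros a; apply (proj2 Hi' _ top); rewrite <- Ht.
    exact (hom_mono j' _ _ (proj2_sig a)). }
  destruct (hom_lift_inj i' (proj1 Hi') _ Himg) as [j Hj]; simpl in Hj.
  set (x0 := exist _ y0 Hy0t : Down B t).
  assert (Hx0 : quotient_by j x0).
  { split.
    - intros a'; destruct (proj1 Hj' (i' a')) as [b' Hb'].
      assert (Hb't : le b' t).
      { assert (H : le (j' b') (j' t)) by (rewrite Hb', Ht; apply hom_mono, top_greatest).
        apply (proj2 Hj') in H; rewrite (join2_absorb_l t y0 Hy0t) in H; exact H. }
      exists (exist _ b' Hb't); apply (proj1 Hi'); rewrite Hj; exact Hb'.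
    - intros a c; transitivity (le (j' (down_val B t a)) (j' (down_val B t c))).
      + rewrite <- !Hj; split; [apply hom_mono | apply (hom_inj_le i' (proj1 Hi'))].
      + assert (E : down_val B t (join2 c x0) = join2 (down_val B t c) y0)
          by exact (hom_join2 (down_incl B t) c x0).
        rewrite (proj2 Hj'), <- E; reflexivity. }
  assert (Hc : comp_eq (down_incl B t) j' j i') by (intros a; symmetry; apply Hj).
  exists (Down B t), (down_incl B t), j.
  split; [apply down_incl_normal_mono |].
  split; [exact (normal_epi_of_quotient j x0 Hx0) |].
  split; [exact Hc |].
  split; [apply (pullback_iff_kernel_le _ _ _ _ x0 y0 (down_incl_normal_mono B t) Hi' Hx0 Hj' Hc)
         | apply (pushout_iff_kernel_le _ _ _ _ x0 y0 (down_incl_normal_mono B t) Hi' Hx0 Hj' Hc)];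
    apply le_refl.
Qed.

Lemma normal_square_along_mono (A B A' : AlgLat) (i : hom A B) (j : hom A A') :
  normal_mono i -> normal_epi j ->
  exists (B' : AlgLat) (i' : hom A' B') (j' : hom B B'),
    normal_mono i' /\ normal_epi j' /\ comp_eq i j' j i' /\
    is_pullback i j j' i' /\ is_pushout i j j' i'.
Proof.
  intros Hi Ej; destruct (quotient_of_normal_epi j Ej) as [x0 Hj].
  set (y0 := i x0); pose proof (up_quotient B y0) as Hj'.
  set (j' := up_proj B y0) in *.
  assert (Hij : forall a, j' (i (join2 a x0)) = j' (i a))
    by (intros a; rewrite hom_join2; apply (quotient_join j' y0 Hj')).
  destruct (hom_desc_surj j (proj1 Hj) (hom_comp i j')) as [i' Hi'0].
  { intros a b E; change (j' (i a) = j' (i b)); rewrite <- (Hij a), <- (Hij b).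
    now rewrite (quotient_eq j x0 Hj a b E). }
  assert (Hi' : forall a, i' (j a) = j' (i a)) by exact Hi'0.
  assert (Hle : forall a b, le (i' (j a)) (i' (j b)) <-> le (j a) (j b)).
  { intros a b; rewrite !Hi', (proj2 Hj'), (proj2 Hj); unfold y0; rewrite <- hom_join2.
    split; [apply (hom_inj_le i (proj1 Hi)) | apply hom_mono]. }
  assert (Hi'n : normal_mono i').
  { split.
    - intros x y E; destruct (proj1 Hj x) as [a <-], (proj1 Hj y) as [b <-].
      apply le_antisym; apply Hle; rewrite E; apply le_refl.
    - intros b' a' Hb; destruct (proj1 Hj a') as [a <-]; rewrite Hi' in Hb.
      change (le (up_val B y0 b') (join2 (i a) (i x0))) in Hb; rewrite <- hom_join2 in Hb.
      destruct (proj2 Hi _ _ Hb) as [a2 Ha2]; exists (j a2).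
      rewrite Hi', Ha2; apply up_proj_val. }
  assert (Hc : comp_eq i j' j i') by (intros a; symmetry; apply Hi').
  exists (Up B y0), i', j'.
  split; [exact Hi'n |].
  split; [exact (normal_epi_of_quotient j' y0 Hj') |].
  split; [exact Hc |].
  split; [apply (pullback_iff_kernel_le _ _ _ _ x0 y0 Hi Hi'n Hj Hj' Hc)
         | apply (pushout_iff_kernel_le _ _ _ _ x0 y0 Hi Hi'n Hj Hj' Hc)];
    apply le_refl.
Qed.

Theorem theoremB : proto_exact NM NE.
Proof.
  split; [exists UnitL; apply unit_zero_object |].
  split; [intros Z HZ A; exact (zero_normal Z A HZ) |].
  split; [intros A B f; apply iso_normal |].
  split; [intros A B C f g h Hh; split; [apply normal_mono_comp | apply normal_epi_comp]; exact Hh |].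
  split.
  { intros A B A' B' i j j' i' Hi Hi' Ej Ej' Hc.
    destruct (quotient_of_normal_epi j Ej) as [x0 Hj], (quotient_of_normal_epi j' Ej') as [y0 Hj'].
    rewrite (pullback_iff_kernel_le i j j' i' x0 y0 Hi Hi' Hj Hj' Hc).
    rewrite (pushout_iff_kernel_le i j j' i' x0 y0 Hi Hi' Hj Hj' Hc).
    reflexivity. }
  split; [exact normal_square_along_epi | exact normal_square_along_mono].
Qed.
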